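(* For every $k>0$ and all $m$-dimensional bodies $A_1,A_2$, $\delta_k(A_1\cup A_2)+\delta_k(A_1\cap A_2)\ge\delta_k(A_1)+\delta_k(A_2)$.
   Context: An $m$-dimensional body is a compact subset of $\mathbb R_+^m$. For $k>0$, its $k$-deficiency is $\delta_k(A)=|A|-k\sum_{j=1}^m|A_{[m]\setminus\{j\}}|$, where $A_{[m]\setminus\{j\}}=\{\mathbf x_{-j}:\mathbf x\in A\}\subseteq\mathbb R^{m-1}$ is the projection deleting coordinate $j$ and $|\cdot|$ denotes Lebesgue measure of the relevant dimension. *)

From HB Require Import structures.
From mathcomp Require Import all_boot all_order all_algebra.
From mathcomp Require Import all_classical all_reals all_analysis.
Set Implicit Arguments. Unset Strict Implicit. Unset Printing Implicit Defensive.
Import Order.TTheory GRing.Theory Num.Theory.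
Import numFieldNormedType.Exports.
Local Open Scope classical_set_scope.
Local Open Scope ring_scope.

Definition box (R : realType) (n : nat) (a b : 'rV[R]_n) : set 'rV[R]_n :=
  [set x | forall i, a ord0 i <= x ord0 i <= b ord0 i].

Definition box_vol (R : realType) (n : nat) (a b : 'rV[R]_n) : R :=
  \prod_(i < n) Num.max (b ord0 i - a ord0 i) 0.

(* n-dimensional Lebesgue (outer) measure: infimum of the total volume of
   countable covers by boxes (families indexed by a subset I of nat, so that
   the empty family is allowed).  On compact sets (the only sets to which it
   is applied below) it coincides with Lebesgue measure; for n = 0 it is the
   counting measure on the one-point space R^0. *)
Definition leb (R : realType) (n : nat) (A : set 'rV[R]_n) : \bar R :=
  ereal_inf [set s | exists (I : set nat) (a b : nat -> 'rV[R]_n),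
      A `<=` \bigcup_(k in I) box (a k) (b k) /\
      s = (\sum_(k <oo | k \in I) (box_vol (a k) (b k))%:E)%E].

Definition del_coord (R : realType) (m : nat) (j : 'I_m) (x : 'rV[R]_m)
  : 'rV[R]_m.-1 := \row_(i < m.-1) x ord0 (lift j i).

Definition proj_del (R : realType) (m : nat) (j : 'I_m) (A : set 'rV[R]_m)
  : set 'rV[R]_m.-1 := del_coord j @` A.

Definition body (R : realType) (m : nat) (A : set 'rV[R]_m) : Prop :=
  compact A /\ A `<=` [set x | forall i, 0 <= x ord0 i].

Definition deficiency (R : realType) (m : nat) (k : R) (A : set 'rV[R]_m)
  : \bar R :=
  (leb A - k%:E * \sum_(j < m) leb (proj_del j A))%E.

(* Lebesgue outer measure is modular on Caratheodory-measurable sets, and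
   compact sets are measurable, so the volume terms of the deficiencies satisfy
   |A1 u A2| + |A1 n A2| = |A1| + |A2|.  Deleting a coordinate commutes with
   unions but only maps A1 n A2 into the intersection of the projections of A1
   and A2; modularity for the (compact) projections and monotonicity then give
   the reverse inequality for the projection terms, and k > 0 combines the two.
   To use Caratheodory's theory, [leb] is identified with the outer measure
   generated by the volume of the smallest enclosing box; half-spaces split
   every box of a cover exactly, so they, and hence boxes, open sets and
   compact sets, are measurable. *)

From HB Require Import structures.
From mathcomp Require Import all_boot all_order all_algebra.
From mathcomp Require Import all_classical all_reals all_analysis.
From mathcomp Require Import lra.
Set Implicit Arguments. Unset Strict Implicit. Unset Printing Implicit Defensive.
Import Order.TTheory GRing.Theory Num.Theory.
Import numFieldNormedType.Exports.
Local Open Scope classical_set_scope.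
Local Open Scope ring_scope.

Lemma nneseries_set1 (R : realType) (f : nat -> \bar R) j :
  (\sum_(k <oo | k \in [set j]) f k = f j)%E.
Proof.
apply: lim_near_cst => //; near=> N.
rewrite -big_filter (@eq_filter _ _ (pred1 j)); last first.
  by move=> k; apply/idP/eqP => [/set_mem|->]; last exact: mem_set.
rewrite filter_pred1_uniq ?iota_uniq ?big_seq1// mem_iota /=.
by near: N; exists j.+1 => // k; rewrite add0n subn0.
Unshelve. all: by end_near. Qed.

Section lebesgue_outer_measure.
Variables (R : realType) (n : nat).
Implicit Types (a b : 'rV[R]_n) (X : set 'rV[R]_n).

(* Every set is declared measurable, so that [mu_ext] below ranges over
   arbitrary countable covers. *)
Definition rV_all : Type := 'rV[R]_n.
HB.instance Definition _ := Pointed.on rV_all.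
HB.instance Definition _ := @isMeasurable.Build default_measure_display rV_all
  [set: set rV_all] I (fun _ _ => I) (fun _ _ => I).

Lemma box_vol_ge0 a b : 0 <= box_vol a b.
Proof. by apply: prodr_ge0 => i _; rewrite le_max lexx orbT. Qed.

Local Open Scope ereal_scope.

(* For [n = 0] every box is the whole one-point space, of volume 1, hence the
   separate value on [set0]. *)
Definition box_content (X : set rV_all) : \bar R :=
  if pselect (X = set0) then 0 else
  ereal_inf [set s | exists a b, X `<=` box a b /\ s = (box_vol a b)%:E].

Lemma box_content0 : box_content set0 = 0.
Proof. by rewrite /box_content; case: pselect. Qed.

Lemma box_content_ge0 X : 0 <= box_content X.
Proof.
rewrite /box_content; case: pselect => /= [//|_].
by apply: le_ereal_inf_tmp => _ [a [b [_ ->]]]; rewrite lee_fin box_vol_ge0.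
Qed.

Lemma box_content_le_vol X a b :
  X `<=` box a b -> box_content X <= (box_vol a b)%:E.
Proof.
move=> Xab; rewrite /box_content; case: pselect => /= _.
  by rewrite lee_fin box_vol_ge0.
by apply: ereal_inf_lbound; exists a, b.
Qed.

Lemma box_content_approx X (e : R) : (0 < e)%R -> X <> set0 ->
  box_content X < +oo ->
  exists a b, X `<=` box a b /\ (box_vol a b)%:E <= box_content X + e%:E.
Proof.
move=> e0 X0; rewrite /box_content; case: pselect => //= _ Xfin.
set S := [set s | _].
have /(lb_ereal_inf_adherent e0) [_ [a [b [Xab ->]]] /ltW] : ereal_inf S \is a fin_num.
  rewrite ge0_fin_numE ?Xfin//.
  by apply: le_ereal_inf_tmp => _ [a [b [_ ->]]]; rewrite lee_fin box_vol_ge0.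
by exists a, b.
Qed.

Lemma mu_ext_box_content_le_leb X : mu_ext box_content X <= leb X.
Proof.
apply: le_ereal_inf_tmp => _ [I [a [b [XI ->]]]].
pose F k : set rV_all := if pselect (I k) then box (a k) (b k) else set0.
apply: (@le_trans _ _ (\sum_(k <oo) box_content (F k))).
  apply: ereal_inf_lbound; exists F => //; split => // x /XI [k Ik xk].
  by exists k => //; rewrite /F; case: pselect.
rewrite [leRHS]eseries_mkcond; apply: lee_nneseries => k _.
  by rewrite box_content_ge0.
rewrite /F; case: pselect => Ik.
  by rewrite mem_set//; exact: box_content_le_vol.
by rewrite box_content0; case: ifP; rewrite // lee_fin box_vol_ge0.
Qed.

Lemma leb_le_mu_ext_box_content X : leb X <= mu_ext box_content X.
Proof.
apply: le_ereal_inf_tmp => _ [A [_ XA] <-].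
have [[k Ak]|/forallNP Afin] := pselect (exists k, box_content (A k) = +oo).
  rewrite (eseries_pinfty _ _ Ak) ?leey// => i _.
  by rewrite gt_eqF// (lt_le_trans _ (box_content_ge0 _)).
apply/lee_addgt0Pr => e e0.
have ek k : (0 < e / (2 ^ k.+1)%:R)%R by rewrite divr_gt0// ltr0n expn_gt0.
pose I := [set k | A k <> set0].
have /choice [G GP] : forall k, exists ab : 'rV[R]_n * 'rV[R]_n, I k ->
    A k `<=` box ab.1 ab.2 /\
    (box_vol ab.1 ab.2)%:E <= box_content (A k) + (e / (2 ^ k.+1)%:R)%:E.
  move=> k; have [Ak0|Ak0] := pselect (A k = set0); first by exists (0%R, 0%R).
  have Akfin : box_content (A k) < +oo by rewrite ltey; apply/eqP/Afin.
  have [a [b Aab]] := box_content_approx (ek k) Ak0 Akfin.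
  by exists (a, b).
apply: (@le_trans _ _ (\sum_(k <oo | k \in I) (box_vol (G k).1 (G k).2)%:E)).
  apply: ereal_inf_lbound; exists I, (fun k => (G k).1), (fun k => (G k).2).
  split => // x /XA [k _ Akx].
  have Ik : I k by move=> Ak; rewrite Ak in Akx.
  by exists k => //; exact: (GP k Ik).1.
apply: le_trans (epsilon_trick _ (fun k => box_content_ge0 (A k)) (ltW e0)).
rewrite [leLHS]eseries_mkcond; apply: lee_nneseries => k _.
  by case: ifP; rewrite // lee_fin box_vol_ge0.
case: ifP => [/set_mem Ik|_]; first exact: (GP k Ik).2.
by rewrite adde_ge0 ?box_content_ge0// lee_fin ltW.
Qed.

Lemma leb_mu_ext X : leb X = mu_ext box_content X.
Proof.
by apply/eqP; rewrite eq_le leb_le_mu_ext_box_content mu_ext_box_content_le_leb.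
Qed.

Lemma leb0 : leb (set0 : set 'rV[R]_n) = 0.
Proof. by rewrite leb_mu_ext mu_ext0 ?box_content0//; exact: box_content_ge0. Qed.

Lemma leb_ge0 X : 0 <= leb X.
Proof. by rewrite leb_mu_ext mu_ext_ge0//; exact: box_content_ge0. Qed.

Lemma le_leb : {homo @leb R n : X Y / X `<=` Y >-> X <= Y}.
Proof. by move=> X Y XY; rewrite !leb_mu_ext le_mu_ext. Qed.

Lemma leb_sigma_subadditive : sigma_subadditive (@leb R n : set rV_all -> _).
Proof.
move=> F; rewrite leb_mu_ext (eq_eseriesr (fun k _ => leb_mu_ext (F k))).
exact: (@mu_ext_sigma_subadditive _ rV_all _ _ box_content_ge0).
Qed.

HB.instance Definition _ := isOuterMeasure.Build R rV_all (@leb R n)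
  leb0 leb_ge0 le_leb leb_sigma_subadditive.

Lemma maxr_subr_split (a b c : R) : (Num.max (Num.min b c - a) 0 +
  Num.max (b - Num.max a c) 0 = Num.max (b - a) 0)%R.
Proof.
by case: (leP b c) => bc; case: (leP a c) => ac; rewrite ?(minEle, maxEle);
  repeat case: ifP => /= ?; lra.
Qed.

Definition set_coord (x : 'rV[R]_n) (i : 'I_n) (c : R) : 'rV[R]_n :=
  \row_j (if j == i then c else x ord0 j).

Lemma box_vol_split a b i (c : R) :
  (box_vol a (set_coord b i (Num.min (b ord0 i) c)) +
   box_vol (set_coord a i (Num.max (a ord0 i) c)) b = box_vol a b)%R.
Proof.
rewrite /box_vol (bigD1 i)//= [X in (_ + X)%R](bigD1 i)//= [RHS](bigD1 i)//=.
rewrite !mxE !eqxx.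
under eq_bigr => j ji do rewrite mxE (negbTE ji).
under [X in (_ + _ * X)%R]eq_bigr => j ji do rewrite mxE (negbTE ji).
by rewrite -mulrDl maxr_subr_split.
Qed.

Lemma leb_le_cover X (I : set nat) (a b : nat -> 'rV[R]_n) :
  X `<=` \bigcup_(k in I) box (a k) (b k) ->
  leb X <= \sum_(k <oo | k \in I) (box_vol (a k) (b k))%:E.
Proof. by move=> XI; apply: ereal_inf_lbound; exists I, a, b. Qed.

Lemma leb_le_box_vol X a b : X `<=` box a b -> leb X <= (box_vol a b)%:E.
Proof.
move=> Xab; rewrite -(nneseries_set1 (fun=> (box_vol a b)%:E) 0).
by apply: leb_le_cover => x /Xab; exists 0%N.
Qed.

(* Cutting each box of a cover along the hyperplane splits its volume exactly. *)
Lemma halfspace_caratheodory i (c : R) :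
  (@leb R n).-caratheodory ([set x | x ord0 i <= c]%R : set rV_all).
Proof.
apply: le_caratheodory_measurable => Y.
apply: le_ereal_inf_tmp => _ [I [a [b [YI ->]]]].
pose lo k := set_coord (b k) i (Num.min (b k ord0 i) c).
pose hi k := set_coord (a k) i (Num.max (a k ord0 i) c).
apply: (@le_trans _ _ (\sum_(k <oo | k \in I) (box_vol (a k) (lo k))%:E
   + \sum_(k <oo | k \in I) (box_vol (hi k) (b k))%:E)).
  apply: leeD; apply: leb_le_cover => x [/YI [k Ik xk] xc]; exists k => // j;
    rewrite mxE; case: eqP => [->|_]; rewrite ?xk//; have /andP[ax xb] := xk i.
  - by rewrite le_min xb ax xc.
  - by rewrite ge_max ax xb ltW ?andbT// ltNge; apply/negP.
rewrite -nneseriesD; try by move=> k _; rewrite lee_fin box_vol_ge0.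
by apply: lee_nneseries => k _; rewrite -EFinD box_vol_split// lee_fin box_vol_ge0.
Qed.

Local Notation CT := (caratheodory_type (@leb R n : set rV_all -> _)).

Lemma measurable_halfspace_le i (c : R) :
  measurable ([set x | x ord0 i <= c]%R : set CT).
Proof. exact: halfspace_caratheodory. Qed.

Lemma measurable_halfspace_lt i (c : R) :
  measurable ([set x | x ord0 i < c]%R : set CT).
Proof.
rewrite (_ : [set x | _] = \bigcup_k [set x | x ord0 i <= c - k.+1%:R^-1]%R).
  by apply: bigcupT_measurable => k; exact: measurable_halfspace_le.
apply/seteqP; split => [x xc|x [k _ /= xck]] /=.
  by have [k xck] := ltr_add_invr xc; exists k => //=; rewrite lerBrDr ltW.
by apply: le_lt_trans xck _; rewrite ltrBlDr ltrDl invr_gt0 ltr0n.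
Qed.

Lemma measurable_box a b : measurable (box a b : set CT).
Proof.
rewrite (_ : box a b = \bigcap_(i in [set: 'I_n])
    ([set x | x ord0 i <= b ord0 i] `&` ~` [set x | x ord0 i < a ord0 i])%R).
  apply: fin_bigcap_measurable => [|i _]; first exact: finite_finset.
  apply: measurableI.
    exact: measurable_halfspace_le.
  exact/measurableC/measurable_halfspace_lt.
apply/seteqP; split => [x xab i _|x xab i] /=.
  by have /andP[ax ->] := xab i; split => //=; apply/negP; rewrite -leNgt.
by have [/= -> /negP] := xab i I; rewrite -leNgt andbT.
Qed.

(* An open set is the countable union of the boxes with rational corners that
   it contains. *)
Lemma measurable_open (O : set 'rV[R]_n) : open O -> measurable (O : set CT).
Proof.
move=> oO; pose rv (p : 'rV[rat]_n) : 'rV[R]_n := map_mx ratr p.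
pose F (pq : 'rV[rat]_n * 'rV[rat]_n) : set 'rV[R]_n :=
  if pselect (box (rv pq.1) (rv pq.2) `<=` O) then box (rv pq.1) (rv pq.2)
  else set0.
rewrite (_ : O = \bigcup_pq F pq).
  apply: countable_bigcupT_measurable; first exact: countableP.
  by move=> pq; rewrite /F; case: pselect => /= _; [exact: measurable_box|].
apply/seteqP; split => [y Oy|y [pq _]]; last first.
  by rewrite /F; case: pselect => /= [sub /sub|_ []].
move: oO; rewrite openE => /(_ y Oy) /nbhs_ballP [e /= e0 eO].
have /choice [p yp] j : exists r : rat, ratr r \in `](y ord0 j - e), (y ord0 j)[%R.
  by apply: rat_in_itvoo; rewrite ltrBlDr ltrDl.
have /choice [q yq] j : exists r : rat, ratr r \in `](y ord0 j), (y ord0 j + e)[%R.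
  by apply: rat_in_itvoo; rewrite ltrDl.
have pqO : box (rv (\row_j p j)) (rv (\row_j q j)) `<=` O.
  move=> x xb; apply: eO; split => // i j; rewrite (ord1 i).
  move: (xb j) (yp j) (yq j); rewrite !mxE !in_itv /=.
  move=> /andP[? ?] /andP[? ?] /andP[? ?].
  by rewrite /ball /= ltr_distl; apply/andP; split; lra.
exists (\row_j p j, \row_j q j) => //; rewrite /F; case: pselect => //= _ j.
move: (yp j) (yq j); rewrite !mxE !in_itv /=.
by move=> /andP[? ?] /andP[? ?]; rewrite !ltW.
Qed.

Lemma compact_caratheodory (K : set 'rV[R]_n) : compact K ->
  (@leb R n).-caratheodory (K : set rV_all).
Proof.
move=> cK; suff : measurable (K : set CT) by [].
rewrite -[K]setCK; apply/measurableC/measurable_open/closed_openC.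
exact: compact_closed.
Qed.

Lemma leb_modular X Y : (@leb R n).-caratheodory (X : set rV_all) ->
  leb (X `|` Y) + leb (X `&` Y) = leb X + leb Y.
Proof.
move=> mX; rewrite (mX (X `|` Y)) (mX Y) setUK (setIC Y X) -addeA.
congr (_ + _); rewrite addeC; congr (_ + _).
by rewrite setIUl setICr set0U.
Qed.

Lemma leb_compact_fin_num (K : set 'rV[R]_n) : compact K -> leb K \is a fin_num.
Proof.
move=> /compact_bounded [M [_ KM]]; rewrite ge0_fin_numE ?leb_ge0//.
apply: le_lt_trans (ltry (box_vol (const_mx (- (M + 1))) (const_mx (M + 1))))%R.
apply: leb_le_box_vol => x Kx i; rewrite !mxE -ler_norml.
apply: le_trans (KM (M + 1)%R _ x Kx); last by rewrite ltrDl.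
by rewrite [leRHS]/Num.norm /= mx_normrE (le_bigmax _ _ (ord0, i)).
Qed.

End lebesgue_outer_measure.

Lemma del_coord_continuous (R : realType) m (j : 'I_m) :
  continuous (@del_coord R m j).
Proof.
move=> x A /nbhs_ballP [e e0 eA]; apply/nbhs_ballP; exists e => // y [_ xy].
by apply: eA; split => // i k; rewrite !mxE; exact: xy.
Qed.

Lemma compact_proj_del (R : realType) m (j : 'I_m) (A : set 'rV[R]_m) :
  compact A -> compact (proj_del j A).
Proof.
move=> cA; apply: continuous_compact cA.
exact/continuous_subspaceT/del_coord_continuous.
Qed.

Lemma leb_proj_del_submodular (R : realType) m (j : 'I_m) (A1 A2 : set 'rV[R]_m) :
  compact A1 ->
  (leb (proj_del j (A1 `|` A2)) + leb (proj_del j (A1 `&` A2)) <=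
   leb (proj_del j A1) + leb (proj_del j A2))%E.
Proof.
move=> cA1; rewrite /proj_del image_setU.
rewrite -(leb_modular _ (compact_caratheodory (compact_proj_del (j := j) cA1))).
by apply/leeD2l/le_leb => _ [x [x1 x2] <-]; split; exists x.
Qed.

Lemma lee_deficiency_modular (R : realType) (k : R) (u i a b su si sa sb : \bar R) :
  0 < k ->
  [/\ u \is a fin_num, i \is a fin_num, a \is a fin_num & b \is a fin_num] ->
  [/\ su \is a fin_num, si \is a fin_num, sa \is a fin_num & sb \is a fin_num] ->
  (u + i = a + b -> su + si <= sa + sb ->
   a - k%:E * sa + (b - k%:E * sb) <= u - k%:E * su + (i - k%:E * si))%E.
Proof.
move=> k0 [] + + + + [] + + + +.
case: u i a b su si sa sb => [u| |] // [i| |] // [a| |] // [b| |] //.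
case=> [su| |] // [si| |] // [sa| |] // [sb| |] // _ _ _ _ _ _ _ _.
rewrite -!EFinM -!EFinB -!EFinD !lee_fin => - [uiab].
by rewrite -(ler_pM2l k0); lra.
Qed.

Theorem lemma4 (R : realType) (m : nat) (k : R) (A1 A2 : set 'rV[R]_m) :
  0 < k -> body A1 -> body A2 ->
  (deficiency k (A1 `|` A2) + deficiency k (A1 `&` A2)
     >= deficiency k A1 + deficiency k A2)%E.
Proof.
move=> k0 [cA1 _] [cA2 _].
have cU := compactU cA1 cA2.
have cI : compact (A1 `&` A2) by apply: compact_closedI cA1 (compact_closed _ cA2).
have sum_fin X : compact X -> (\sum_(j < m) leb (proj_del j X))%E \is a fin_num.
  by move=> cX; apply/sum_fin_numP => j _ _; exact/leb_compact_fin_num/compact_proj_del.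
apply: lee_deficiency_modular k0 _ _ (leb_modular _ (compact_caratheodory cA1)) _.
- by split; exact: leb_compact_fin_num.
- by split; exact: sum_fin.
- by rewrite -!big_split; apply: lee_sum => j _; exact: leb_proj_del_submodular.
Qed.
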